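(* Let $d=\infty$ and $C>0$. Then $$\mathcal P_d\subsetneq\mathcal A_d=T^\uparrow_{d,C}(\mathcal S_{d,C})\subsetneq\mathcal N_d\subsetneq\mathcal M_d,$$ and $T^\uparrow_{d,C}$ is a bijection from $\mathcal S_{d,C}$ onto $\mathcal A_d$ with inverse $T^\downarrow_{d,C}|_{\mathcal A_d}$. Moreover $T^\downarrow_{d,C}(\mathcal M_d)=\mathcal S_{d,C}$, and for every ${\boldsymbol\gamma}\in\mathcal M_d$ one has $(T^\uparrow_{d,C}\circ T^\downarrow_{d,C}){\boldsymbol\gamma}\le{\boldsymbol\gamma}$, with equality if and only if ${\boldsymbol\gamma}\in\mathcal A_d$.
   Context: Let $d\in\mathbb N\cup\{\infty\}$. Write $[d]=\{1,\dots,d\}$ if $d\in\mathbb N$ and $[d]=\mathbb N$ if $d=\infty$; for $s\in\mathbb N$, $[s]=\{1,\dots,s\}$. Let $\mathcal U_d$ be the set of all finite subsets of $[d]$. For families ${\boldsymbol\gamma}=(\gamma_u)_{u\in\mathcal U_d}$ of real numbers, inequalities and limits are meant componentwise, and $\mathbf 0$ denotes the zero family. The set of weights is $\mathcal W_d=\{{\boldsymbol\gamma}\in\mathbb R^{\mathcal U_d}:{\boldsymbol\gamma}\ge\mathbf 0\}$. For $v\in\mathcal U_d$ the difference operator $\Delta_v$ on $\mathbb R^{\mathcal U_d}$ is $(\Delta_v{\boldsymbol\gamma})_u=\sum_{w\subseteq v}(-1)^{|w|}\gamma_{u\cup w}$. Weights are completely monotone if $\Delta_v{\boldsymbol\gamma}\ge\mathbf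 0$ for every $v\in\mathcal U_d$; $\mathcal M_d$ denotes the set of completely monotone weights. For $C>0$ let $\mathcal S_{d,C}=\{{\boldsymbol\gamma}\in\mathcal W_d:\sum_{v\in\mathcal U_d}C^{2|v|}\gamma_v<\infty\}$, and let $T^\uparrow_{d,C}\colon\mathcal S_{d,C}\to\mathcal W_d$, $(T^\uparrow_{d,C}{\boldsymbol\gamma})_u=\sum_{v\in\mathcal U_d,\,u\subseteq v}C^{2|v|}\gamma_v$. Define $T^\downarrow_{d,C}\colon\mathcal M_d\to\mathcal W_d$ by $(T^\downarrow_{d,C}{\boldsymbol\gamma})_u=C^{-2|u|}\lim_{s\to\infty}(\Delta_{[s]\setminus u}{\boldsymbol\gamma})_u$ for $d=\infty$ (the sequence is non-increasing in $[0,\gamma_u]$ for ${\boldsymbol\gamma}\in\mathcal M_d$). For $d=\infty$, with the convention $\max\emptyset=0$: $\mathcal N_d=\{{\boldsymbol\gamma}\in\mathcal M_d:\ \gamma_u\to0 \text{ as } \max u\to\infty\}$ (i.e. for every $\varepsilon>0$ there is $N$ with $\gamma_u<\varepsilon$ whenever $\max u\ge N$); $\mathcal P_d=\{{\boldsymbol\gamma}\in\mathcal M_d:\sum_{v\in\mathcal U_d}\gamma_v<\infty\}$; and $\mathcal A_d=\{{\boldsymbol\gamma}\in\mathcal M_d:\lim_{r\to\infty}\lim_{s\to\infty}\Delta_{[s]\setminus[r]}{\boldsymbol\gamma}={\boldsymbol\gamma}\}$ (componentwise iterated limits). *)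

From HB Require Import structures.
From mathcomp Require Import all_boot all_order all_algebra.
From mathcomp Require Import finmap.
From mathcomp Require Import all_classical all_reals all_analysis.
Set Implicit Arguments. Unset Strict Implicit. Unset Printing Implicit Defensive.
Import Order.TTheory GRing.Theory Num.Theory.
Local Open Scope ring_scope.
Local Open Scope classical_set_scope.

(* Index set [d] = N = {1,2,...} for d = infinity is encoded by nat via
   i <-> i.+1, so U_d (finite subsets of [d]) is {fset nat}, and
   [s] = {1,...,s} is encoded by {0,...,s-1}. *)
Definition Ud := {fset nat}.

Definition family (R : realType) := Ud -> R.

Definition sq (s : nat) : Ud := [fset (val i) | i : 'I_s]%fset.

(* max u in the original 1-based labelling, with max emptyset = 0 *)
Definition maxU (u : Ud) : nat := \max_(i <- u) i.+1.

Definition card (u : Ud) : nat := #|` u|%fset.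

Definition Delta (R : realType) (v : Ud) (g : family R) (u : Ud) : R :=
  \sum_(w <- fpowerset v) (-1) ^+ card w * g (fsetU u w).

Definition Wd (R : realType) : set (family R) := [set g | forall u, 0 <= g u].

Definition Md (R : realType) : set (family R) :=
  [set g | Wd g /\ forall v u, 0 <= Delta v g u].

Definition Sd (R : realType) (C : R) : set (family R) :=
  [set g | Wd g /\
     (\esum_(v in [set: Ud]) ((C ^+ (2 * card v) * g v)%:E) < +oo)%E].

Definition Tup (R : realType) (C : R) (g : family R) : family R :=
  fun u => fine (\esum_(v in [set v : Ud | fsubset u v])
                    ((C ^+ (2 * card v) * g v)%:E)).

Definition Tdown (R : realType) (C : R) (g : family R) : family R :=
  fun u => C ^- (2 * card u) * limn ((fun s : nat => Delta (fsetD (sq s) u) g u) : nat -> R^o).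

Definition Nd (R : realType) : set (family R) :=
  [set g | Md g /\ forall eps : R, 0 < eps ->
     exists N : nat, forall u, (N <= maxU u)%N -> g u < eps].

Definition Pd (R : realType) : set (family R) :=
  [set g | Md g /\ (\esum_(v in [set: Ud]) ((g v)%:E) < +oo)%E].

Definition Ad (R : realType) : set (family R) :=
  [set g | Md g /\ forall u,
     ((fun r : nat => limn ((fun s : nat => Delta (fsetD (sq s) (sq r)) g u) : nat -> R^o)) : nat -> R^o) @ \oo --> (g u : R^o)].

(* Möbius inversion over the subsets of a finite set shows that, for a
   completely monotone g, the non-increasing limits
   t_u = lim_s (Delta_([s] \ u) g)_u satisfy sum_(v ⊇ u) t_v <= g_u; since
   t_u = C^(2|u|) (Tdown g)_u this gives Tdown g ∈ S and Tup (Tdown g) <= g.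
   Conversely, for h ∈ S every difference (Delta_A (Tup h))_u is the sum of
   C^(2|v|) h_v over the v ⊇ u avoiding A, a sub-sum of a convergent sum; the
   limits in Tdown and in the definition of A are then limits of such sums,
   which gives Tdown (Tup h) = h and identifies the iterated limit defining A
   with Tup (Tdown g).  The strict inclusions are witnessed by the product
   weights prod_(i ∈ u) p_i with p = 1 and p_i = 1/(i+1), and by the image
   under Tup of a weight carried by the initial segments [n]. *)

From Pilot Require Import Defs.
From HB Require Import structures.
From mathcomp Require Import all_boot all_order all_algebra.
From mathcomp Require Import finmap.
From mathcomp Require Import all_classical all_reals all_analysis.
From mathcomp Require Import lra ring.
Import Order.TTheory GRing.Theory Num.Theory.
Import numFieldNormedType.Exports.
Set Implicit Arguments. Unset Strict Implicit. Unset Printing Implicit Defensive.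
Local Open Scope ring_scope.
Local Open Scope classical_set_scope.
Local Open Scope fset_scope.

(** * Finite differences *)

Lemma card_fsetU1 x w : x \notin w -> Defs.card (x |` w) = (Defs.card w).+1.
Proof. by move=> xw; rewrite /Defs.card cardfsU1 xw. Qed.

Lemma big_fpowersetU1 (K : choiceType) (V : nmodType) (F : {fset K} -> V) x
    (A : {fset K}) : x \notin A ->
  \sum_(w <- fpowerset (x |` A)) F w =
  (\sum_(w <- fpowerset A) F w + \sum_(w <- fpowerset A) F (x |` w))%R.
Proof.
move=> xA; rewrite (big_fsetID _ (fun w : {fset K} => x \notin w)) /=; congr (_ + _)%R.
  apply: eq_fbigl => w; rewrite !inE !fpowersetE /=.
  apply/andP/idP => [[/fsubsetP s xw]|/fsubsetP s].
    apply/fsubsetP => i iw; have := s i iw; rewrite !inE.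
    by case/orP => // /eqP ei; rewrite -ei iw in xw.
  split; last by apply/negP => /s; rewrite (negbTE xA).
  by apply/fsubsetP => i /s ?; rewrite !inE; apply/orP; right.
have -> : [fset w in fpowerset (x |` A) | ~~ (x \notin w)] =
          [fset x |` w | w in fpowerset A].
  apply/fsetP => w; rewrite !inE /= negbK; apply/idP/imfsetP => /=.
    move=> /andP[ws xw]; exists (w `\ x); last by rewrite fsetD1K.
    by rewrite fpowersetE fsubDset -fpowersetE.
  case=> w0; rewrite fpowersetE => w0A ->.
  by rewrite fpowersetE fsetUS //= !inE eqxx.
rewrite big_imfset //= => w1 w2; rewrite !fpowersetE => /fsubsetP h1 /fsubsetP h2 e.
apply/fsetP => i; have := congr1 (fun s => i \in s) e; rewrite /= !inE.
case: (eqVneq i x) => [->|_] //=.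
by rewrite (contraNF (h1 x) xA) (contraNF (h2 x) xA).
Qed.

Section Differences.
Variables (R : realType) (g : Defs.family R).

Lemma Delta_fset0 u : Delta fset0 g u = g u.
Proof.
by rewrite /Delta fpowerset0 big_seq_fset1 /Defs.card cardfs0 expr0 mul1r fsetU0.
Qed.

Lemma Delta_fsetU1 x A u : x \notin A ->
  Delta (x |` A) g u = Delta A g u - Delta A g (x |` u).
Proof.
move=> xA; rewrite /Delta big_fpowersetU1 //; congr (_ + _)%R.
rewrite -sumrN big_seq [RHS]big_seq; apply: eq_bigr => w; rewrite fpowersetE => wA.
have xw : x \notin w by apply: contra xA; apply: (fsubsetP wA).
by rewrite card_fsetU1 // exprS mulN1r mulNr fsetUCA fsetUA.
Qed.

Lemma Delta_eq0 x A u : x \in A -> x \in u -> Delta A g u = 0.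
Proof.
move=> xA xu; rewrite -(fsetD1K xA) Delta_fsetU1 ?fsetD11 //.
by rewrite (fsetUidPr _ _ (_ : [fset x] `<=` u)) ?subrr // fsub1set.
Qed.

(* Möbius inversion: splitting a difference along the subsets of A. *)
Lemma sum_Delta_fpowerset A B u : [disjoint A & B] ->
  \sum_(w <- fpowerset A) Delta ((A `\` w) `|` B) g (u `|` w) = Delta B g u.
Proof.
elim/fset1U_rect: A => [|x A xA IH].
  by move=> _; rewrite fpowerset0 big_seq_fset1 fsetD0 fset0U fsetU0.
rewrite fdisjointU1X => /andP[xB dAB].
rewrite big_fpowersetU1 // -(IH dAB) -big_split /= [RHS]big_seq big_seq.
apply: eq_bigr => w; rewrite fpowersetE => wA.
have xw : x \notin w by apply: contra xA; apply: (fsubsetP wA).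
have -> : ((x |` A) `\` w) `|` B = x |` ((A `\` w) `|` B).
  by apply/fsetP => i; rewrite !inE; case: (eqVneq i x) => [->|] //=; rewrite (negbTE xw).
rewrite Delta_fsetU1; last first.
  by rewrite !inE; apply/negP => /orP[/andP[_ h]|h]; [rewrite h in xA|rewrite h in xB].
have -> : ((x |` A) `\` (x |` w)) `|` B = (A `\` w) `|` B.
  apply/fsetP => i; rewrite !inE; case: (eqVneq i x) => [->|] //=.
  by rewrite (negbTE xA) andbF.
by rewrite fsetUCA subrK.
Qed.

End Differences.

Section Sequences.
Variable R : realType.

Lemma cvgn_eps (f : nat -> R^o) (l : R^o) :
  (forall e : R, 0 < e -> exists N, forall n, (N <= n)%N -> `|l - f n| <= e) ->
  f @ \oo --> l.
Proof.
move=> H; apply/cvgrPdist_le => e e0; have [N HN] := H e e0.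
near=> n; apply: HN; near: n; exact: nbhs_infty_ge.
Unshelve. all: by end_near. Qed.

Lemma cvgn_eventually_eq (f g : nat -> R^o) (l : R^o) N :
  (forall n, (N <= n)%N -> f n = g n) -> f @ \oo --> l -> g @ \oo --> l.
Proof.
move=> e; apply: cvg_trans; apply: near_eq_cvg; near=> n.
by rewrite e //; near: n; exact: nbhs_infty_ge.
Unshelve. all: by end_near. Qed.

Lemma cvgn_unique (f : nat -> R^o) (l l' : R^o) :
  f @ \oo --> l -> f @ \oo --> l' -> l = l'.
Proof. by move=> fl fl'; rewrite -(cvg_lim _ fl) ?(cvg_lim _ fl'). Qed.

Lemma cvgn_sum (I : Type) (s : seq I) (f : I -> nat -> R^o) (l : I -> R^o) :
  (forall i, f i @ \oo --> l i) ->
  (fun n => \sum_(i <- s) f i n) @ \oo --> \sum_(i <- s) l i.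
Proof.
move=> H; elim: s => [|i s IH].
  by rewrite big_nil; under eq_fun do rewrite big_nil; exact: cvg_cst.
by rewrite big_cons; under eq_fun do rewrite big_cons; exact: cvgD.
Qed.

End Sequences.

Lemma mem_sq s i : (i \in sq s) = (i < s)%N.
Proof.
rewrite /sq; apply/imfsetP/idP => [[j _ ->]|h] /=; first exact: ltn_ord.
by exists (Ordinal h).
Qed.

Lemma sqS s : sq s.+1 = s |` sq s.
Proof. by apply/fsetP => i; rewrite !inE !mem_sq ltnS leq_eqVlt. Qed.

Lemma card_sq n : Defs.card (sq n) = n.
Proof.
elim: n => [|n IH]; last by rewrite sqS card_fsetU1 ?IH // mem_sq ltnn.
by rewrite /Defs.card (_ : sq 0 = fset0) ?cardfs0 //; apply/fsetP => i; rewrite mem_sq.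
Qed.

Lemma maxU_leq v s : (maxU v <= s)%N = (v `<=` sq s).
Proof.
apply/bigmax_leqP_seq/fsubsetP => [h i iv|h i iv _]; first by rewrite mem_sq; exact: h.
by rewrite -mem_sq; exact: h.
Qed.

Lemma ltn_maxU i v : i \in v -> (i < maxU v)%N.
Proof. by move=> iv; apply: (leq_bigmax_seq i). Qed.

Lemma leq_maxU u v : u `<=` v -> (maxU u <= maxU v)%N.
Proof. by move=> /fsubsetP uv; apply/bigmax_leqP_seq => i iu _; exact/ltn_maxU/uv. Qed.

Lemma maxU_gtP u n : (n < maxU u)%N -> exists2 i, i \in u & (n <= i)%N.
Proof.
move=> h; case: (boolP (has (fun i => n <= i)%N u)) => [/hasP[i iu ni]|/hasPn H].
  by exists i.
suff : (maxU u <= n)%N by rewrite leqNgt h.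
by apply/bigmax_leqP_seq => i iu _; have := H i iu; rewrite -ltnNge.
Qed.

Lemma maxU_fset1 N : maxU [fset N] = N.+1.
Proof. by rewrite /maxU big_seq_fset1. Qed.

Lemma fsetUD_fsubset (u v : Ud) : u `<=` v -> u `|` (v `\` u) = v.
Proof.
move=> /fsubsetP uv; apply/fsetP => i; rewrite !inE.
by case iu: (i \in u) => //=; rewrite uv.
Qed.

Lemma fsetUDK_disjoint (u w : Ud) : [disjoint w & u] -> (u `|` w) `\` u = w.
Proof.
move=> /fdisjointP d; apply/fsetP => i; rewrite !inE.
case iw: (i \in w); last by case: (i \in u).
by rewrite (negbTE (d _ iw)) orbT.
Qed.

Lemma fsetD_sq_split (u w : Ud) r s : u `<=` sq r -> w `<=` sq r `\` u -> (r <= s)%N ->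
  ((sq r `\` u) `\` w) `|` (sq s `\` sq r) = sq s `\` (u `|` w).
Proof.
move=> /fsubsetP ur /fsubsetP wr rs; apply/fsetP => i; rewrite !inE !mem_sq.
case ir: (i < r)%N; first by rewrite (leq_trans ir rs) /=; case: (i \in u); case: (i \in w).
have iu : i \notin u by apply/negP => /ur; rewrite mem_sq ir.
have iw : i \notin w by apply/negP => /wr; rewrite !inE mem_sq ir andbF.
by rewrite (negbTE iu) (negbTE iw) !andbF.
Qed.

Lemma ler_sum_fsubset (R : realType) (T : choiceType) (A B : {fset T}) (f : T -> R) :
  A `<=` B -> (forall x, x \in B -> 0 <= f x) ->
  \sum_(x <- A) f x <= \sum_(x <- B) f x.
Proof.
move=> AB f0; rewrite (big_fsetID _ (mem A) B) /=.
have -> : \sum_(x <- [fset x in B | x \in A]) f x = \sum_(x <- A) f x.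
  apply: eq_fbigl => x; rewrite !inE /=; case xA: (x \in A); rewrite ?andbT ?andbF //.
  exact: (fsubsetP AB).
by rewrite lerDl big_seq sumr_ge0 // => x; rewrite !inE /= => /andP[xB _]; exact: f0.
Qed.

(* v |-> v `\` u is injective on the supersets of u. *)
Lemma ler_sum_fsetD (R : realType) u S (G : Ud -> R) (F : {fset Ud}) :
  (forall w, 0 <= G w) -> (forall v, v \in F -> u `<=` v /\ v `<=` S) ->
  \sum_(v <- F) G (v `\` u) <= \sum_(w <- fpowerset (S `\` u)) G w.
Proof.
move=> G0 HF.
have -> : \sum_(v <- F) G (v `\` u) = \sum_(w <- [fset v `\` u | v in F]) G w.
  rewrite big_imfset //= => v1 v2 /HF[h1 _] /HF[h2 _] e.
  by rewrite -(fsetUD_fsubset h1) -(fsetUD_fsubset h2) e.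
apply: ler_sum_fsubset => [|w _]; last exact: G0.
apply/fsubsetP => w /imfsetP [v /HF [_ vS] ->].
by rewrite fpowersetE; apply: fsetSD.
Qed.

Definition beyond (s : nat) : set Ud := [set v | (s < maxU v)%N].

Section SummableFamily.
Variables (R : realType) (k : Ud -> R).
Hypothesis k_ge0 : forall v, 0 <= k v.
Hypothesis k_summable : (\esum_(v in [set: Ud]) (k v)%:E < +oo)%E.
Local Close Scope fset_scope.

Definition rsum (P : set Ud) : R := fine (\esum_(v in P) (k v)%:E).

Lemma le_esum_subset P Q : P `<=` Q ->
  (\esum_(v in P) (k v)%:E <= \esum_(v in Q) (k v)%:E)%E.
Proof.
move=> PQ; rewrite (esumID P Q); last by move=> v _; rewrite lee_fin.
by rewrite setIidr // leeDl // esum_ge0 // => v _; rewrite lee_fin.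
Qed.

Lemma rsumE P : (rsum P)%:E = \esum_(v in P) (k v)%:E.
Proof.
rewrite fineK // ge0_fin_numE; last by rewrite esum_ge0 // => v _; rewrite lee_fin.
by apply: le_lt_trans k_summable; apply: le_esum_subset.
Qed.

Lemma rsum_ge0 P : 0 <= rsum P.
Proof. by rewrite -lee_fin rsumE esum_ge0 // => v _; rewrite lee_fin. Qed.

Lemma rsum_setID B A : rsum A = rsum (A `&` B) + rsum (A `&` ~` B).
Proof. by apply: EFin_inj; rewrite EFinD !rsumE; apply: esumID => v _; rewrite lee_fin. Qed.

Lemma le_rsum P Q : P `<=` Q -> rsum P <= rsum Q.
Proof. by move=> PQ; rewrite -lee_fin !rsumE le_esum_subset. Qed.

Lemma rsum_set1 v : rsum [set v] = k v.
Proof. by rewrite /rsum esum_set1 // lee_fin. Qed.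

Lemma ler_sum_rsum P (F : {fset Ud}) : (forall v, v \in F -> P v) ->
  \sum_(v <- F) k v <= rsum P.
Proof.
move=> FP; rewrite -lee_fin rsumE -sumEFin; apply: esum_ge.
exists [set` F]; first by split; [exact: finite_fset| move=> v /= /FP].
by rewrite fsbig_finite ?set_fsetK //; exact: finite_fset.
Qed.

Lemma rsum_le P (M : R) :
  (forall F : {fset Ud}, (forall v, v \in F -> P v) -> \sum_(v <- F) k v <= M) ->
  rsum P <= M.
Proof.
move=> H; rewrite -lee_fin rsumE; apply: ge_ereal_sup => _ [X [finX XP] <-].
rewrite fsbig_finite // sumEFin lee_fin; apply: H => v.
by rewrite in_fset_set // in_setE => /XP.
Qed.

Lemma rsum_beyond_small e : 0 < e ->
  exists N, forall s, (N <= s)%N -> rsum (beyond s) <= e.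
Proof.
move=> e0; set T := rsum [set: Ud].
have : ((T - e)%:E < \esum_(v in [set: Ud]) (k v)%:E)%E by rewrite -rsumE -/T lte_fin; lra.
move=> /ereal_sup_gt [_ [X [finX _] <-]].
rewrite fsbig_finite // sumEFin lte_fin => HX.
exists (\max_(v <- fset_set X) maxU v) => s Ns.
have : \sum_(v <- fset_set X) k v <= rsum (setT `&` ~` beyond s).
  apply: ler_sum_rsum => v vX; split => //; apply/negP; rewrite -leqNgt.
  exact: leq_trans (leq_bigmax_seq v _ _) Ns.
by have := rsum_setID (beyond s) setT; rewrite -/T setTI; lra.
Qed.

Lemma rsum_dist_le P Q B : P `&` ~` Q `<=` B -> Q `&` ~` P `<=` B ->
  `|rsum P - rsum Q| <= rsum B.
Proof.
move=> h1 h2; rewrite (rsum_setID P Q) (rsum_setID Q P) setIC.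
have := le_rsum h1; have := le_rsum h2.
have := rsum_ge0 (P `&` ~` Q); have := rsum_ge0 (Q `&` ~` P).
by rewrite ler_norml; move=> *; apply/andP; split; lra.
Qed.

Lemma cvg_rsum (P : nat -> set Ud) (Q : set Ud) :
  (forall s, P s `&` ~` Q `<=` beyond s /\ Q `&` ~` P s `<=` beyond s) ->
  ((fun s => rsum (P s)) : nat -> R^o) @ \oo --> (rsum Q : R^o).
Proof.
move=> H; apply: cvgn_eps => e e0; have [N HN] := rsum_beyond_small e0.
exists N => n Nn; have [h1 h2] := H n.
by rewrite distrC; apply: le_trans (HN _ Nn); apply: rsum_dist_le.
Qed.

End SummableFamily.

(** * Completely monotone families *)

Section CompletelyMonotone.
Variables (R : realType) (g : Defs.family R).
Hypothesis g_Md : Md g.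

Lemma Delta_ge0 A u : 0 <= Delta A g u.
Proof. by case: g_Md => _; apply. Qed.

Lemma Md_ge0 u : 0 <= g u.
Proof. by case: g_Md => /(_ u). Qed.

Lemma Delta_fsetU1_le x A u : x \notin A -> Delta (x |` A) g u <= Delta A g u.
Proof. by move=> xA; rewrite Delta_fsetU1 // gerBl Delta_ge0. Qed.

Lemma Delta_le A u : Delta A g u <= g u.
Proof.
elim/fset1U_rect: A u => [|x A xA IH] u; first by rewrite Delta_fset0.
exact: le_trans (Delta_fsetU1_le _ xA) (IH u).
Qed.

Lemma Delta_ge (B : Ud) u : g u - \sum_(x <- B) g (x |` u) <= Delta B g u.
Proof.
elim/fset1U_rect: B => [|x B xB IH]; first by rewrite big_seq_fset0 subr0 Delta_fset0.
rewrite Delta_fsetU1 // big_fsetU1 //=.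
by have := Delta_le B (x |` u); lra.
Qed.

Definition Dseq (u : Ud) : nat -> R^o := fun s => Delta (sq s `\` u) g u.

Lemma Dseq_nonincreasing u : nonincreasing_seq (Dseq u).
Proof.
apply/nonincreasing_seqP => s; rewrite /Dseq sqS.
case su: (s \in u).
  rewrite (_ : (s |` sq s) `\` u = sq s `\` u) //.
  by apply/fsetP => i; rewrite !inE; case: (eqVneq i s) => [->|]; rewrite ?su.
rewrite (_ : (s |` sq s) `\` u = s |` (sq s `\` u)); last first.
  by apply/fsetP => i; rewrite !inE; case: (eqVneq i s) => [->|]; rewrite ?su.
by apply: Delta_fsetU1_le; rewrite !inE mem_sq ltnn andbF.
Qed.

(* [Dlim u] is C^(2|u|) * Tdown C g u. *)
Definition Dlim (u : Ud) : R := limn (Dseq u).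

Lemma Dseq_cvg u : Dseq u @ \oo --> (Dlim u : R^o).
Proof.
apply: (@nonincreasing_is_cvgn R (Dseq u)); first exact: Dseq_nonincreasing.
by exists 0 => _ [s _ <-]; apply: Delta_ge0.
Qed.

Lemma Dlim_le u s : Dlim u <= Dseq u s.
Proof.
have Dseq_is_cvg : cvgn (Dseq u : R^nat) by exact: Dseq_cvg.
exact: (@nonincreasing_cvgn_ge R (Dseq u) (Dseq_nonincreasing u) Dseq_is_cvg s).
Qed.

Lemma Dlim_ge0 u : 0 <= Dlim u.
Proof.
have Dseq_is_cvg : cvgn (Dseq u : R^nat) by exact: Dseq_cvg.
apply: (@limr_ge _ _ _ R _ (Dseq u : R^nat) Dseq_is_cvg).
by near=> s; apply: Delta_ge0.
Unshelve. all: by end_near. Qed.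

Lemma sum_Dlim_le u (F : {fset Ud}) : (forall v, v \in F -> u `<=` v) ->
  \sum_(v <- F) Dlim v <= g u.
Proof.
move=> HF; set s := maxn (maxU u) (\max_(v <- F) maxU v).
have us : u `<=` sq s by rewrite -maxU_leq leq_maxl.
have vs v : v \in F -> v `<=` sq s.
  by move=> vF; rewrite -maxU_leq (leq_trans _ (leq_maxr _ _)) // (leq_bigmax_seq v).
pose G w := Delta (((sq s `\` u) `\` w) `|` fset0) g (u `|` w).
apply: (@le_trans _ _ (\sum_(v <- F) G (v `\` u))).
  rewrite big_seq [X in _ <= X]big_seq; apply: ler_sum => v vF.
  rewrite /G fsetUD_fsubset ?HF // fsetU0.
  have -> : (sq s `\` u) `\` (v `\` u) = sq s `\` v.
    apply/fsetP => i; rewrite !inE; have := fsubsetP (HF v vF) i.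
    by case: (i \in u); case: (i \in v); case: (i \in sq s) => // /(_ isT).
  exact: Dlim_le.
rewrite -[X in _ <= X](Delta_fset0 g u) -(sum_Delta_fpowerset g u (fdisjointX0 (sq s `\` u))).
exact: ler_sum_fsetD (fun w => Delta_ge0 _ _) (fun v vF => conj (HF v vF) (vs v vF)).
Qed.

Lemma cvg_Delta_fsetD_sq u r : u `<=` sq r ->
  ((fun s => Delta (sq s `\` sq r) g u) : nat -> R^o) @ \oo -->
  (\sum_(w <- fpowerset (sq r `\` u)) Dlim (u `|` w) : R^o).
Proof.
move=> ur.
apply: (@cvgn_eventually_eq _ (fun s => \sum_(w <- fpowerset (sq r `\` u)) Dseq (u `|` w) s) _ _ r).
  move=> s rs.
  have disj : [disjoint sq r `\` u & sq s `\` sq r].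
    by apply/fdisjointP => i; rewrite !inE => /andP[_ ->].
  rewrite -(sum_Delta_fpowerset g u disj) big_seq [RHS]big_seq; apply: eq_bigr => w.
  by rewrite fpowersetE => wA; rewrite /Dseq fsetD_sq_split.
by apply: cvgn_sum => w; exact: Dseq_cvg.
Qed.

End CompletelyMonotone.

(** * The operators Tup and Tdown *)

Definition Tweight (R : realType) (C : R) (h : Defs.family R) (v : Ud) : R :=
  C ^+ (2 * Defs.card v) * h v.

Definition supsets_avoiding (u A : Ud) : set Ud :=
  [set v | (u `<=` v) && fdisjoint v A].

Section TupOfSummable.
Variables (R : realType) (C : R) (h : Defs.family R).
Hypotheses (C_gt0 : 0 < C) (h_Sd : Sd C h).

Lemma Tweight_ge0 v : 0 <= Tweight C h v.
Proof. by case: h_Sd => /(_ v) h0 _; rewrite mulr_ge0 // exprn_ge0 // ltW. Qed.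

Lemma Tweight_summable : (\esum_(v in [set: Ud]) (Tweight C h v)%:E < +oo)%E.
Proof. by case: h_Sd. Qed.

Let rsumT := rsum (Tweight C h).

Lemma Delta_Tup A u : Delta A (Tup C h) u = rsumT (supsets_avoiding u A).
Proof.
elim/fset1U_rect: A u => [|x A xA IH] u.
  rewrite Delta_fset0; congr rsum; apply/seteqP; split => v; rewrite /supsets_avoiding /=.
    by move=> ->; rewrite fdisjointX0.
  by case/andP.
rewrite Delta_fsetU1 // !IH /rsumT.
rewrite (rsum_setID Tweight_ge0 Tweight_summable (supsets_avoiding (x |` u) A)).
have -> : (supsets_avoiding u A `&` supsets_avoiding (x |` u)%fset A)%classic =
          supsets_avoiding (x |` u) A.
  apply/seteqP; split => v; rewrite /supsets_avoiding /=; first by case.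
  rewrite fsubUset fsub1set => /andP[/andP[xv uv] dv].
  by rewrite xv uv dv.
have -> : (supsets_avoiding u A `&` ~` supsets_avoiding (x |` u)%fset A)%classic =
          supsets_avoiding u (x |` A).
  apply/seteqP; split => v; rewrite /supsets_avoiding /= fsubUset fsub1set fdisjointXU fdisjointX1.
    case=> /andP[uv dv]; rewrite uv dv /= !andbT => xv.
    by apply/negP => xv'; apply: xv; rewrite xv'.
  by case/andP => uv /andP[xv dv]; rewrite uv dv (negbTE xv).
lra.
Qed.

Lemma Md_Tup : Md (Tup C h).
Proof.
have rsumT_ge0 := rsum_ge0 Tweight_ge0 Tweight_summable.
by split => [u|A u]; [rewrite -(Delta_fset0 (Tup C h) u) |]; rewrite Delta_Tup.
Qed.

Lemma Tdown_Tup : Tdown C (Tup C h) = h.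
Proof.
apply/funext => u; rewrite /Tdown.
suff -> : limn ((fun s => Delta (sq s `\` u) (Tup C h) u) : nat -> R^o) = Tweight C h u.
  by rewrite /Tweight mulrA mulVf ?mul1r // expf_neq0 // gt_eqF.
apply: cvg_lim => //; under eq_fun do rewrite Delta_Tup.
rewrite -(rsum_set1 Tweight_ge0).
(* A superset of u avoiding [s] \ u, other than u itself, reaches beyond [s]. *)
apply: (cvg_rsum Tweight_ge0 Tweight_summable) => s; split => v /=.
  rewrite /supsets_avoiding /=; case=> /andP[uv dv] vu.
  have [i iv iu] : exists2 i, i \in v & i \notin u.
    apply/fsubsetPn; apply/negP => vu'; apply: vu.
    by apply/eqP; rewrite eqEfsubset vu' uv.
  have := fdisjointP dv i iv; rewrite !inE mem_sq iu /= -leqNgt => si.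
  exact: leq_trans (ltn_maxU iv).
move=> [-> nP]; exfalso; apply: nP; rewrite /supsets_avoiding /= fsubset_refl /=.
by apply/fdisjointP => i iu; rewrite !inE iu.
Qed.

End TupOfSummable.

Section TdownOfCompletelyMonotone.
Variables (R : realType) (C : R) (g : Defs.family R).
Hypotheses (C_gt0 : 0 < C) (g_Md : Md g).

Lemma Tweight_Tdown v : Tweight C (Tdown C g) v = Dlim g v.
Proof. by rewrite /Tweight /Tdown mulrA mulfV ?mul1r // expf_neq0 // gt_eqF. Qed.

Lemma Sd_Tdown : Sd C (Tdown C g).
Proof.
split.
  move=> v; rewrite /Tdown mulr_ge0 ?Dlim_ge0 //.
  by rewrite invr_ge0 exprn_ge0 // ltW.
apply: (@le_lt_trans _ _ (g fset0)%:E); last exact: ltry.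
apply: ge_ereal_sup => _ [X [finX _] <-].
rewrite fsbig_finite // sumEFin lee_fin.
under eq_bigr do rewrite -/(Tweight C (Tdown C g) _) Tweight_Tdown.
by apply: sum_Dlim_le => // v _; exact: fsub0set.
Qed.

Let rsumT := rsum (Tweight C (Tdown C g)).
Let T_ge0 := Tweight_ge0 C_gt0 Sd_Tdown.
Let T_summable := Tweight_summable Sd_Tdown.

Lemma Tup_Tdown_le u : Tup C (Tdown C g) u <= g u.
Proof.
apply: (rsum_le T_ge0 T_summable) => F HF.
under eq_bigr do rewrite Tweight_Tdown.
exact: sum_Dlim_le.
Qed.

Lemma sum_Dlim_fpowerset u r : u `<=` sq r ->
  \sum_(w <- fpowerset (sq r `\` u)) Dlim g (u `|` w) =
  rsumT [set v | (u `<=` v) && (v `<=` sq r)].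
Proof.
move=> ur; apply/eqP; rewrite eq_le; apply/andP; split.
  have dj w : w \in fpowerset (sq r `\` u) -> [disjoint w & u].
    rewrite fpowersetE => /fsubsetP wA; apply/fdisjointP => i /wA.
    by rewrite !inE => /andP[].
  have -> : \sum_(w <- fpowerset (sq r `\` u)) Dlim g (u `|` w) =
            \sum_(v <- [fset u `|` w | w in fpowerset (sq r `\` u)]) Dlim g v.
    rewrite [RHS]big_imfset //= => w1 w2 /dj d1 /dj d2 e.
    by rewrite -(fsetUDK_disjoint d1) -(fsetUDK_disjoint d2) e.
  under eq_bigr do rewrite -Tweight_Tdown.
  apply: (ler_sum_rsum T_ge0 T_summable) => v /imfsetP [w wA ->] /=.
  rewrite fsubsetUl /= fsubUset ur /=.
  by move: wA; rewrite fpowersetE => /fsubset_trans; apply; rewrite fsubDset fsubsetUr.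
apply: (rsum_le T_ge0 T_summable) => F HF.
under eq_bigr do rewrite Tweight_Tdown.
have -> : \sum_(v <- F) Dlim g v = \sum_(v <- F) Dlim g (u `|` (v `\` u)).
  rewrite big_seq [RHS]big_seq; apply: eq_bigr => v vF.
  by have /andP[uv _] := HF v vF; rewrite fsetUD_fsubset.
exact: ler_sum_fsetD (fun w => Dlim_ge0 g_Md _)
  (fun v vF => let: conj a b := andP (HF v vF) in conj a b).
Qed.

Lemma cvg_iterated_Delta u :
  ((fun r => limn ((fun s => Delta (sq s `\` sq r) g u) : nat -> R^o)) : nat -> R^o)
    @ \oo --> (Tup C (Tdown C g) u : R^o).
Proof.
apply: (@cvgn_eventually_eq _ (fun r => rsumT [set v | (u `<=` v) && (v `<=` sq r)]) _ _ (maxU u)).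
  move=> r ur; have us : u `<=` sq r by rewrite -maxU_leq.
  by rewrite (cvg_lim _ (cvg_Delta_fsetD_sq g_Md us)) // sum_Dlim_fpowerset.
apply: (cvg_rsum T_ge0 T_summable) => r; split => v /=.
  by case=> /andP[uv _] []; exact: uv.
case=> uv nP; rewrite /beyond /= ltnNge maxU_leq; apply/negP => vr.
by apply: nP; rewrite uv vr.
Qed.

Lemma Ad_Tup_Tdown : Ad g <-> Tup C (Tdown C g) = g.
Proof.
split => [[_ H]|e]; last by split => // u; have := cvg_iterated_Delta (u:=u); rewrite e.
by apply/funext => u; exact: cvgn_unique (cvg_iterated_Delta (u:=u)) (H u).
Qed.

End TdownOfCompletelyMonotone.

Lemma Ad_Tup (R : realType) (C : R) (h : Defs.family R) : 0 < C -> Sd C h -> Ad (Tup C h).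
Proof.
by move=> C_gt0 h_Sd; apply/(Ad_Tup_Tdown C_gt0 (Md_Tup C_gt0 h_Sd)); rewrite Tdown_Tup.
Qed.

Lemma Ad_image_Tup (R : realType) (C : R) : 0 < C -> @Ad R = (Tup C @` Sd C)%classic.
Proof.
move=> C_gt0; apply/seteqP; split => g; last by move=> [h h_Sd <-]; exact: Ad_Tup.
move=> g_Ad; exists (Tdown C g); first exact: Sd_Tdown g_Ad.1.
exact: (Ad_Tup_Tdown C_gt0 g_Ad.1).1 g_Ad.
Qed.

Lemma Tdown_image_Md (R : realType) (C : R) : 0 < C -> (Tdown C @` @Md R)%classic = Sd C.
Proof.
move=> C_gt0; apply/seteqP; split => h; first by move=> [g g_Md <-]; exact: Sd_Tdown.
move=> h_Sd; exists (Tup C h); first exact: Md_Tup C_gt0 h_Sd.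
exact: Tdown_Tup.
Qed.

Section Inclusions.
Variable R : realType.

Lemma Pd_Ad (g : Defs.family R) : Pd g -> Ad g.
Proof.
move=> [g_Md g_summable]; split => // u.
have g0 := Md_ge0 g_Md.
apply: cvgn_eps => e e0; have [N HN] := rsum_beyond_small g0 g_summable e0.
exists (maxn N (maxU u)) => r hr /=.
have Nr : (N <= r)%N by apply: leq_trans hr; exact: leq_maxl.
have ur : u `<=` sq r by rewrite -maxU_leq; apply: leq_trans hr; exact: leq_maxr.
set L := limn _.
have cf : cvgn ((fun s => Delta (sq s `\` sq r) g u) : nat -> R^o).
  exact: cvgP (cvg_Delta_fsetD_sq g_Md ur).
have L_le : L <= g u by apply: (limr_le cf); near=> s; exact: Delta_le.
(* Bonferroni: removing the tail [s] \ [r] costs at most the mass beyond r. *)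
have L_ge : g u - rsum g (beyond r) <= L.
  apply: (limr_ge cf); near=> s; apply: le_trans (Delta_ge g_Md _ _); rewrite lerB //.
  have xu x : x \in sq s `\` sq r -> x \notin u.
    rewrite !inE mem_sq => /andP[xr _]; apply/negP => /(fsubsetP ur).
    by rewrite mem_sq (negbTE xr).
  have -> : \sum_(x <- sq s `\` sq r) g (x |` u) =
            \sum_(v <- [fset x |` u | x in sq s `\` sq r]) g v.
    rewrite [RHS]big_imfset //= => x y /xu xu' /xu yu' exy.
    have : x \in y |` u by rewrite -exy fset1U1.
    by rewrite !inE (negbTE xu') orbF => /eqP.
  apply: (ler_sum_rsum g0 g_summable) => v /imfsetP [x xB ->] /=.
  have xr : (r <= x)%N by move: xB; rewrite !inE mem_sq -leqNgt => /andP[].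
  exact: leq_trans (ltn_maxU (fset1U1 x u)).
by have := HN r Nr; rewrite ler_norml => hT; apply/andP; split; lra.
Unshelve. all: by end_near. Qed.

Lemma Ad_Nd (C : R) (g : Defs.family R) : 0 < C -> Ad g -> Nd g.
Proof.
move=> C_gt0 g_Ad; have g_Md := g_Ad.1; split => // eps e0.
have Tge0 := Tweight_ge0 C_gt0 (Sd_Tdown C_gt0 g_Md).
have Tsummable := Tweight_summable (Sd_Tdown C_gt0 g_Md).
have [N HN] := rsum_beyond_small Tge0 Tsummable (divr_gt0 e0 (ltr0Sn R 1)).
exists N.+1 => u Nu; rewrite -(Ad_Tup_Tdown C_gt0 g_Md).1 //.
apply: (@le_lt_trans _ _ (eps / 2)); last by lra.
apply: le_trans (HN N (leqnn N)); apply: le_rsum => // v /= uv.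
exact: leq_trans (leq_maxU uv).
Qed.

End Inclusions.

(** * Product weights *)

Section ProductWeights.
Variables (R : realType) (p : nat -> R).
Hypothesis p01 : forall i, 0 <= p i <= 1.

Definition prodw : Defs.family R := fun u => \prod_(i <- u) p i.

Lemma Delta_prodw A u : [disjoint A & u] ->
  Delta A prodw u = prodw u * \prod_(i <- A) (1 - p i).
Proof.
elim/fset1U_rect: A u => [|x A xA IH] u.
  by move=> _; rewrite Delta_fset0 big_seq_fset0 mulr1.
rewrite fdisjointU1X => /andP[xu dA].
have dA' : [disjoint A & x |` u] by rewrite fdisjointXU fdisjointX1 xA dA.
by rewrite Delta_fsetU1 // IH // IH // /prodw !big_fsetU1 //=; ring.
Qed.

Lemma prodw_ge0 u : 0 <= prodw u.
Proof. by apply: prodr_ge0 => i _; case/andP: (p01 i). Qed.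

Lemma prodw_le1 u : prodw u <= 1.
Proof. by apply: prodr_ile1 => i _; exact: p01. Qed.

Lemma Md_prodw : Md prodw.
Proof.
split => [u|A u]; first exact: prodw_ge0.
case: (boolP (fdisjoint A u)) => [d|]; last first.
  by rewrite /fdisjoint => /fset0Pn [x]; rewrite inE => /andP[xA xu]; rewrite (Delta_eq0 _ xA xu).
rewrite Delta_prodw // mulr_ge0 ?prodw_ge0 // prodr_ge0 // => i _.
by case/andP: (p01 i) => _ ?; rewrite subr_ge0.
Qed.

End ProductWeights.

Section ProductExamples.
Variable R : realType.

Lemma Md_cst1 : Md (fun _ : Ud => 1 : R).
Proof.
have -> : (fun _ : Ud => 1 : R) = prodw (fun _ => 1).
  by apply/funext => u; rewrite /prodw big1.
by apply: Md_prodw => i; rewrite ler01 lexx.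
Qed.

Lemma not_Nd_cst1 : ~ Nd (fun _ : Ud => 1 : R).
Proof.
move=> [_ H]; have [N HN] := H 1 ltr01.
by have := HN [fset N]; rewrite maxU_fset1 => /(_ (leqnSn N)); rewrite ltxx.
Qed.

(* [hinv i] is the paper's p_(i+1) = 1/(i+2) in the 1-based labelling. *)
Definition hinv (i : nat) : R := (i.+2)%:R^-1.

Lemma hinv01 i : 0 <= hinv i <= 1.
Proof. by rewrite /hinv invr_ge0 ler0n /= invf_le1 ?ltr0n // ler1n. Qed.

Lemma Nd_prodw_hinv : Nd (prodw hinv).
Proof.
split; first exact: (Md_prodw hinv01).
move=> eps e0; set M := Num.bound (eps^-1).
have HM : eps^-1 < M%:R by apply: archi_boundP; rewrite invr_ge0 ltW.
exists M.+1 => u Mu; have [i iu Mi] := maxU_gtP Mu.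
rewrite /prodw (big_fsetD1 i iu) /=.
apply: (@le_lt_trans _ _ (hinv i)).
  have h1 := prodw_le1 hinv01 (u `\ i); have h0 := prodw_ge0 hinv01 (u `\ i).
  by have := hinv01 i; rewrite /prodw in h1 h0; nra.
rewrite /hinv -[eps]invrK ltf_pV2 ?posrE ?ltr0n ?invr_gt0 //.
apply: lt_le_trans HM _; rewrite ler_nat.
exact: leq_trans Mi (leq_trans (leqnSn i) (leqnSn i.+1)).
Qed.

(* A telescoping product: prod_(r <= i < s) (i+1)/(i+2) = (r+1)/(s+1). *)
Lemma prod_hinv_fsetD_sq r s : (r <= s)%N ->
  \prod_(i <- sq s `\` sq r) (1 - hinv i) = (r.+1)%:R / (s.+1)%:R.
Proof.
elim: s => [|s IH] rs.
  by move: rs; rewrite leqn0 => /eqP ->; rewrite fsetDv big_seq_fset0 divff // pnatr_eq0.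
move: rs; rewrite leq_eqVlt => /orP [/eqP ->|rs].
  by rewrite fsetDv big_seq_fset0 divff // pnatr_eq0.
have -> : sq s.+1 `\` sq r = s |` (sq s `\` sq r).
  apply/fsetP => i; rewrite sqS !inE !mem_sq.
  by case: (eqVneq i s) => [->|] //=; rewrite ltnNge -ltnS rs.
rewrite big_fsetU1 /=; last by rewrite !inE !mem_sq ltnn andbF.
rewrite IH // /hinv.
have h1 : (s%:R + 1)%R != 0 :> R by rewrite natr1 pnatr_eq0.
have h2 : (s%:R + 1 + 1)%R != 0 :> R by rewrite !natr1 pnatr_eq0.
by rewrite -[(s.+2)%:R]natr1 -![(s.+1)%:R]natr1; field; rewrite h1 h2.
Qed.

Lemma cvg_ratio r : ((fun s => (r.+1)%:R / (s.+1)%:R : R) : nat -> R^o) @ \oo --> (0 : R^o).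
Proof.
apply: cvgn_eps => e e0; set M := Num.bound ((r.+1)%:R / e).
have HM : (r.+1)%:R / e < M%:R by apply: archi_boundP; rewrite divr_ge0 // ltW.
exists M => s Ms; rewrite sub0r normrN ger0_norm ?divr_ge0 //.
rewrite ler_pdivrMr ?ltr0n //.
have : (r.+1)%:R / e < (s.+1)%:R by apply: lt_le_trans HM _; rewrite ler_nat (leq_trans Ms).
by rewrite ltr_pdivrMr // => /ltW; rewrite mulrC.
Qed.

Lemma not_Ad_prodw_hinv : ~ Ad (prodw hinv).
Proof.
move=> [_ /(_ fset0) H].
have H0 : ((fun r => limn ((fun s => Delta (sq s `\` sq r) (prodw hinv) fset0) : nat -> R^o))
    : nat -> R^o) @ \oo --> (0 : R^o).
  apply: (@cvgn_eventually_eq _ (fun _ => 0) _ _ 0) (cvg_cst _) => r _.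
  apply/esym/cvg_lim => //.
  apply: (@cvgn_eventually_eq _ (fun s => (r.+1)%:R / (s.+1)%:R : R) _ _ r) (cvg_ratio r).
  move=> s rs; rewrite Delta_prodw ?fdisjointX0 // prod_hinv_fsetD_sq //.
  by rewrite /prodw big_seq_fset0 mul1r.
have := cvgn_unique H0 H; rewrite /prodw big_seq_fset0 => /eqP.
by rewrite eq_sym oner_eq0.
Qed.

End ProductExamples.

(** * A weight carried by the initial segments *)

Section InitialSegments.
Variables (R : realType) (C : R).
Hypothesis C_gt0 : 0 < C.

Definition chain_mass (n : nat) : R := n%:R * 2^-1 ^+ n.

Definition chain_weight (v : Ud) : R :=
  if v == sq (Defs.card v) then chain_mass (Defs.card v) else 0.

Definition chain (v : Ud) : R := C ^- (2 * Defs.card v) * chain_weight v.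

Lemma chain_mass_ge0 n : 0 <= chain_mass n.
Proof. by rewrite mulr_ge0 // exprn_ge0 // invr_ge0 ler0n. Qed.

Lemma chain_weight_ge0 v : 0 <= chain_weight v.
Proof. by rewrite /chain_weight; case: ifP => _ //; exact: chain_mass_ge0. Qed.

Lemma sum_chain_mass N : \sum_(n < N) chain_mass n = 2 - 2 * (N.+1)%:R * 2^-1 ^+ N.
Proof.
elim: N => [|N IH]; first by rewrite big_ord0 expr0 !mulr1 subrr.
rewrite big_ord_recr /= IH /chain_mass exprS -(natr1 N.+1) -(natr1 N).
by field.
Qed.

Lemma sum_chain_weight_le (F : {fset Ud}) : \sum_(v <- F) chain_weight v <= 2.
Proof.
set N := (\max_(v <- F) Defs.card v).+1.
pose cw v n := if v == sq n then chain_mass n else 0.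
have cw_ge0 v n : 0 <= cw v n by rewrite /cw; case: ifP => _ //; exact: chain_mass_ge0.
apply: (@le_trans _ _ (\sum_(v <- F) \sum_(n < N) cw v n)).
  rewrite big_seq [X in _ <= X]big_seq; apply: ler_sum => v vF.
  rewrite /chain_weight; case: ifP => e; first last.
    by apply: sumr_ge0 => n _; exact: cw_ge0.
  have lt : (Defs.card v < N)%N by rewrite ltnS (leq_bigmax_seq v).
  rewrite (bigD1 (Ordinal lt)) //= {1}/cw e lerDl.
  by apply: sumr_ge0 => n _; exact: cw_ge0.
rewrite exchange_big /=; apply: (@le_trans _ _ (\sum_(n < N) chain_mass n)).
  apply: ler_sum => n _; rewrite -big_mkcond /= big_fset_condE.
  apply: (@le_trans _ _ (\sum_(v <- [fset sq n]) chain_mass n)); last by rewrite big_seq_fset1.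
  apply: ler_sum_fsubset => [|*]; last exact: chain_mass_ge0.
  by apply/fsubsetP => v; rewrite !inE => /andP[_ ->].
by rewrite sum_chain_mass gerBl mulr_ge0 // exprn_ge0 // invr_ge0 ler0n.
Qed.

Lemma Tweight_chain v : Tweight C chain v = chain_weight v.
Proof. by rewrite /Tweight /chain mulrA mulfV ?mul1r // expf_neq0 // gt_eqF. Qed.

Lemma Sd_chain : Sd C chain.
Proof.
split=> [v|].
  by rewrite /chain mulr_ge0 ?chain_weight_ge0 // invr_ge0 exprn_ge0 // ltW.
apply: (@le_lt_trans _ _ (2:R)%:E); last exact: ltry.
apply: ge_ereal_sup => _ [X [finX _] <-].
rewrite fsbig_finite // sumEFin lee_fin.
under eq_bigr do rewrite -/(Tweight C chain _) Tweight_chain.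
exact: sum_chain_weight_le.
Qed.

(* Each of the 2^n subsets of [n] sees the mass n 2^-n carried by [n]. *)
Lemma not_Pd_Tup_chain : ~ Pd (Tup C chain).
Proof.
move=> [T_Md T_summable]; have T_ge0 := Md_ge0 T_Md.
set T := rsum (Tup C chain) [set: Ud].
have n_le_T n : n%:R <= T.
  apply: (@le_trans _ _ (\sum_(u <- fpowerset (sq n)) Tup C chain u)); last first.
    exact: ler_sum_rsum T_ge0 T_summable _ _ _.
  apply: (@le_trans _ _ (\sum_(u <- fpowerset (sq n)) chain_mass n)).
    have := card_fpowerset (sq n); rewrite [#|` sq n|]card_sq => card_pow.
    rewrite big_const_seq count_predT iter_addr_0 card_pow.
    rewrite -[chain_mass n *+ _]mulr_natl natrX /chain_mass.
    by rewrite mulrCA -exprMn mulfV ?pnatr_eq0 // expr1n mulr1.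
  rewrite big_seq [X in _ <= X]big_seq; apply: ler_sum => u.
  rewrite fpowersetE => un.
  apply: (@le_trans _ _ (\sum_(v <- [fset sq n]) Tweight C chain v)).
    by rewrite big_seq_fset1 Tweight_chain /chain_weight card_sq eqxx.
  apply: (ler_sum_rsum (Tweight_ge0 C_gt0 Sd_chain) (Tweight_summable Sd_chain)).
  by move=> v; rewrite inE => /eqP ->.
have T0 : 0 <= T by exact: rsum_ge0.
by have := archi_boundP T0; have := n_le_T (Num.bound T); lra.
Qed.

End InitialSegments.

Local Close Scope fset_scope.

Lemma properPA (R : realType) (C : R) : 0 < C -> @Pd R `<` @Ad R.
Proof.
move=> C_gt0; split=> [g|PA]; first exact: Pd_Ad.
exact/(not_Pd_Tup_chain C_gt0)/PA/(Ad_Tup C_gt0)/Sd_chain.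
Qed.

Lemma properAN (R : realType) (C : R) : 0 < C -> @Ad R `<` @Nd R.
Proof.
move=> C_gt0; split=> [g|AN]; first exact: Ad_Nd C_gt0.
exact/not_Ad_prodw_hinv/AN/Nd_prodw_hinv.
Qed.

Lemma properNM (R : realType) : @Nd R `<` @Md R.
Proof. by split=> [g []//|NM]; exact/not_Nd_cst1/NM/Md_cst1. Qed.

Theorem mainTheorem2 (R : realType) (C : R) (hC : 0 < C) :
  [/\ (@Pd R) `<` (@Ad R),
      (@Ad R) = Tup C @` Sd C,
      (@Ad R) `<` (@Nd R) &
      (@Nd R) `<` (@Md R)] /\
  [/\ (forall g, Sd C g -> (@Ad R) (Tup C g)),
      (forall g, Sd C g -> Tdown C (Tup C g) = g),
      (forall g, (@Ad R) g -> Sd C (Tdown C g) /\ Tup C (Tdown C g) = g),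
      Tdown C @` (@Md R) = Sd C &
      (forall g, (@Md R) g ->
         (forall u, Tup C (Tdown C g) u <= g u) /\
         (Tup C (Tdown C g) = g <-> (@Ad R) g))].
Proof.
split; split.
- exact: properPA hC.
- exact: Ad_image_Tup.
- exact: properAN hC.
- exact: properNM.
- by move=> g; exact: Ad_Tup.
- by move=> g; exact: Tdown_Tup.
- move=> g g_Ad; split; first exact: Sd_Tdown g_Ad.1.
  exact: (Ad_Tup_Tdown hC g_Ad.1).1 g_Ad.
- exact: Tdown_image_Md.
- move=> g g_Md; split; first exact: Tup_Tdown_le.
  by split => H; apply/(Ad_Tup_Tdown hC g_Md).
Qed.
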